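(* Let $k'_X$ be a kernel on a set $\mathcal{X}$ with $\sup_xk'_X(x,x)\le B_{k'}^2$, let $\mathfrak{K}$ be a kernel on $\mathcal{H}_{k'_X}$ with canonical feature map $\Phi_{\mathfrak{K}}$, and let $\mathcal{B}$ be the closed ball of radius $B_{k'}$ in $\mathcal{H}_{k'_X}$. Assume that for any $u,v\in\mathcal{B}$ and unit-norm vector $e\in\mathcal{H}_{k'_X}$, the function $h_{u,v,e}:(\lambda,\mu)\in\mathbb{R}^2\mapsto\mathfrak{K}(u+\lambda e,v+\mu e)$ admits a mixed partial derivative $\partial_1\partial_2h_{u,v,e}$ at $(0,0)$ which is bounded in absolute value by a constant $C_{\mathfrak{K}}^2$ independent of $(u,v,e)$. Then $\|\Phi_{\mathfrak{K}}(u)-\Phi_{\mathfrak{K}}(v)\|\le C_{\mathfrak{K}}\|u-v\|$ for all $u,v\in\mathcal{B}$.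
   Context: The canonical feature map of $\mathfrak{K}$ is $\Phi_{\mathfrak{K}}(v)=\mathfrak{K}(v,\cdot)\in\mathcal{H}_{\mathfrak{K}}$, the RKHS of $\mathfrak{K}$. *)

From HB Require Import structures.
From mathcomp Require Import all_boot all_order all_algebra.
From mathcomp Require Import all_classical all_reals all_analysis.
Set Implicit Arguments. Unset Strict Implicit. Unset Printing Implicit Defensive.
Import Order.TTheory GRing.Theory Num.Theory.
Import numFieldNormedType.Exports.
Local Open Scope classical_set_scope.
Local Open Scope ring_scope.

Definition is_kernel (R : realType) (T : Type) (k : T -> T -> R) : Prop :=
  (forall x y, k x y = k y x) /\
  (forall (n : nat) (c : 'I_n -> R) (x : 'I_n -> T),
      0 <= \sum_(i < n) \sum_(j < n) c i * c j * k (x i) (x j)).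

Definition inner_product (R : realType) (V : normedModType R)
  (ip : V -> V -> R) : Prop :=
  (forall x y, ip x y = ip y x) /\
  (forall (a : R) (x y z : V), ip (a *: x + y) z = a * ip x z + ip y z) /\
  (forall x, ip x x = `|x| ^+ 2).

Definition feature_span (R : realType) (V : lmodType R) (T : Type)
  (phi : T -> V) : set V :=
  [set y | exists (n : nat) (c : 'I_n -> R) (x : 'I_n -> T),
      y = \sum_(i < n) c i *: phi (x i)].

(* (V, ip, phi) is (an isometric copy of) the RKHS of k together with its
   canonical feature map phi x = k(x, .): V is a Hilbert space, the
   reproducing identity k x y = <phi x, phi y> holds, and the span of the
   feature vectors is dense. *)
Definition rkhs_presentation (R : realType) (T : Type) (k : T -> T -> R)
  (V : completeNormedModType R) (ip : V -> V -> R) (phi : T -> V) : Prop :=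
  inner_product ip /\
  (forall x y, k x y = ip (phi x) (phi y)) /\
  closure (feature_span phi) = setT.

Definition mixed_partial00 (R : realType) (h : R -> R -> R) (d : R) : Prop :=
  (\forall l \near (0 : R), derivable (h l) 0 1) /\
  derivable (fun l => derive1 (h l) 0) 0 1 /\
  derive1 (fun l => derive1 (h l) 0) 0 = d.

From HB Require Import structures.
From mathcomp Require Import all_boot all_order all_algebra.
From mathcomp Require Import all_classical all_reals all_analysis.
Import Order.TTheory GRing.Theory Num.Theory.
Import numFieldNormedType.Exports.
Local Open Scope classical_set_scope.
Local Open Scope ring_scope.

(** For [u <> v] put [T := |u - v|], [e := (u - v) / T] and
   [f s t := K (v + s e) (v + t e)].  By the reproducing property,
   [|Phi u - Phi v|^2] is the second difference
   [f T T - f 0 T - (f T 0 - f 0 0)] of [f] over the square [[0, T]^2].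
   The segment from [v] to [u] stays in the ball, so the mixed partial
   derivative of [f] is bounded by [C^2] on that square, and two applications
   of the mean value theorem bound the second difference by [C^2 T^2]. *)

Section ShiftDerivative.
Variables (R : realType) (V : normedModType R) (g : R -> V) (s : R).

Lemma derivable_shift :
  derivable (fun l => g (s + l)) 0 1 -> derivable g s 1.
Proof.
rewrite /derivable.
suff -> : (fun h : R => h^-1 *: ((g \o shift s) (h *: 1) - g s)) =
          (fun h => h^-1 *: (((fun l => g (s + l)) \o shift 0) (h *: 1)
                             - g (s + 0))) by [].
by apply/funext => h /=; rewrite !addr0 [_ + s]addrC.
Qed.

Lemma derive1_shift : derive1 g s = derive1 (fun l => g (s + l)) 0.
Proof.
rewrite /derive1; suff -> : (fun h : R => h^-1 *: (g (h + s) - g s)) =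
    (fun h => h^-1 *: (g (s + (h + 0)) - g (s + 0))) by [].
by apply/funext => h /=; rewrite !addr0 [_ + s]addrC.
Qed.

End ShiftDerivative.

Lemma ler_norm_increment (R : realType) (g : R -> R) (a b c : R) : a <= b ->
  (forall x, a <= x <= b -> derivable g x 1 /\ `|derive1 g x| <= c) ->
  `|g b - g a| <= c * (b - a).
Proof.
move=> ab dg.
have gcont : {within `[a, b], continuous g}.
  by apply: derivable_within_continuous => x; rewrite in_itv /= => /dg[].
have gder x : x \in `]a, b[%R -> is_derive x 1 g (derive1 g x).
  rewrite in_itv /= => /andP[ax xb].
  have [gx _] := dg x (introT andP (conj (ltW ax) (ltW xb))).
  by rewrite derive1E; apply: derivableP.
have [x /[!in_itv] /= /dg[_ dgx] ->] := MVT_segment ab gder gcont.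
by rewrite normrM [`|b - a|]ger0_norm ?subr_ge0 // ler_wpM2r ?subr_ge0.
Qed.

Lemma mixed_partial00_shift (R : realType) (f : R -> R -> R) (s t d : R) :
  mixed_partial00 (fun l m => f (s + l) (t + m)) d ->
  [/\ derivable (f s) t 1, derivable (fun r => derive1 (f r) t) s 1
    & derive1 (fun r => derive1 (f r) t) s = d].
Proof.
have shift_in r : derive1 (f r) t = derive1 (fun m => f r (t + m)) 0.
  exact: derive1_shift.
have shift_out : (fun l => derive1 (fun m => f (s + l) (t + m)) 0) =
                 (fun l => (fun r => derive1 (f r) t) (s + l)).
  by apply/funext => l; rewrite shift_in.
rewrite /mixed_partial00 shift_out => -[/nbhs_singleton /= dft [dfs <-]].
split; first by apply: derivable_shift; rewrite addr0 in dft.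
  exact: derivable_shift.
exact: derive1_shift.
Qed.

Lemma ler_norm_second_difference (R : realType) (f : R -> R -> R)
    (a b a' b' c : R) : a <= b -> a' <= b' ->
  (forall s t, a <= s <= b -> a' <= t <= b' -> exists d,
     mixed_partial00 (fun l m => f (s + l) (t + m)) d /\ `|d| <= c) ->
  `|f b b' - f a b' - (f b a' - f a a')| <= c * (b - a) * (b' - a').
Proof.
move=> ab ab' mixed.
have partial s t : a <= s <= b -> a' <= t <= b' -> derivable (f s) t 1.
  by move=> st tt; have [d [/mixed_partial00_shift[]]] := mixed s t st tt.
have ab_a : a <= a <= b by rewrite lexx ab.
have ab_b : a <= b <= b by rewrite lexx ab.
have ler_partial t : a' <= t <= b' ->
    `|derive1 (f b) t - derive1 (f a) t| <= c * (b - a).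
  move=> tt; apply: (@ler_norm_increment _ (fun r => derive1 (f r) t)) => //.
  by move=> s st; have [d [/mixed_partial00_shift[_ ds <-]]] := mixed s t st tt.
apply: (@ler_norm_increment _ (fun t => f b t - f a t)) => // t tt.
have dfb := partial b t ab_b tt; have dfa := partial a t ab_a tt.
split; first exact: derivableB.
by rewrite derive1E deriveB // -!derive1E; apply: ler_partial.
Qed.

Section InnerProduct.
Context {R : realType} {V : normedModType R} {ip : V -> V -> R}.
Hypothesis ipV : inner_product ip.

Lemma ip0l z : ip 0 z = 0.
Proof.
have [_ [iplin _]] := ipV.
have := iplin 1 0 0 z.
by rewrite scaler0 addr0 mul1r -{1}[ip 0 z]addr0 => /addrI <-.
Qed.

Lemma ipBl x y z : ip (x - y) z = ip x z - ip y z.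
Proof.
have [_ [iplin _]] := ipV.
have := iplin (-1) y 0 z; rewrite addr0 ip0l addr0 scaleN1r mulN1r => ipNl.
by have := iplin 1 x (- y) z; rewrite scale1r mul1r ipNl.
Qed.

Lemma sqr_normB_ip x y :
  `|x - y| ^+ 2 = ip x x - ip y x - (ip x y - ip y y).
Proof.
have [ipC [_ ipnorm]] := ipV.
by rewrite -ipnorm ipBl ![ip _ (x - y)]ipC !ipBl.
Qed.

End InnerProduct.

Lemma normr_segment_le (R : realType) (V : normedModType R) (u v : V)
    (B a : R) : `|u| <= B -> `|v| <= B -> 0 <= a <= 1 ->
  `|v + a *: (u - v)| <= B.
Proof.
move=> uB vB /andP[a0 a1].
have -> : v + a *: (u - v) = (1 - a) *: v + a *: u.
  by rewrite scalerBr scalerBl scale1r addrCA addrC.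
apply: (le_trans (ler_normD _ _)).
rewrite !normrZ !ger0_norm ?subr_ge0 //.
apply: (le_trans (lerD (ler_wpM2l _ vB) (ler_wpM2l _ uB))); rewrite ?subr_ge0 //.
by rewrite -mulrDl subrK mul1r.
Qed.

Theorem lemmaA3 (R : realType) (X : Type) (k' : X -> X -> R) (Bk : R)
  (H : completeNormedModType R) (ip : H -> H -> R) (phi : X -> H)
  (K : H -> H -> R)
  (HK : completeNormedModType R) (ipK : HK -> HK -> R) (Phi : H -> HK)
  (C : R) :
  is_kernel k' ->
  (forall x, k' x x <= Bk ^+ 2) ->
  rkhs_presentation k' ip phi ->
  is_kernel K ->
  rkhs_presentation K ipK Phi ->
  0 <= C ->
  (forall u v e : H, `|u| <= Bk -> `|v| <= Bk -> `|e| = 1 ->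
     exists d : R,
       mixed_partial00 (fun l m : R => K (u + l *: e) (v + m *: e)) d /\
       `|d| <= C ^+ 2) ->
  forall u v : H, `|u| <= Bk -> `|v| <= Bk ->
    `|Phi u - Phi v| <= C * `|u - v|.
Proof.
move=> _ _ _ _ [ipKV [Krep _]] C0 mixed u v uB vB.
have [->|uv] := eqVneq u v; first by rewrite !subrr !normr0 mulr0.
set T := `|u - v|; have T0 : 0 < T by rewrite normr_gt0 subr_eq0.
set e := T^-1 *: (u - v).
have e1 : `|e| = 1 by rewrite normrZ ger0_norm ?invr_ge0 ?ltW ?mulVf ?gt_eqF.
have seg s : v + s *: e = v + (s / T) *: (u - v) by rewrite scalerA.
pose f s t := K (v + s *: e) (v + t *: e).
have fT : v + T *: e = u by rewrite seg mulfV ?gt_eqF // scale1r addrC subrK.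
have f0 : v + 0 *: e = v by rewrite scale0r addr0.
have inB s : 0 <= s <= T -> `|v + s *: e| <= Bk.
  move=> /andP[s0 sT]; rewrite seg normr_segment_le //.
  by rewrite ler_pdivrMr // mul1r sT andbT divr_ge0 // ltW.
have second_difference : `|f T T - f 0 T - (f T 0 - f 0 0)| <= C ^+ 2 * T * T.
  have := @ler_norm_second_difference R f 0 T 0 T (C ^+ 2).
  rewrite !subr0; apply; rewrite ?ltW //.
  move=> s t /inB sB /inB tB; have [d [md dC]] := mixed _ _ _ sB tB e1.
  exists d; split => //; rewrite /f.
  by under eq_fun do under eq_fun do rewrite !scalerDl !addrA.
have sqr_dist : `|Phi u - Phi v| ^+ 2 = f T T - f 0 T - (f T 0 - f 0 0).
  by rewrite /f fT f0 (sqr_normB_ip ipKV) !Krep.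
move: (le_trans (ler_norm _) second_difference); rewrite -sqr_dist.
rewrite -mulrA -expr2 -exprMn ler_sqr ?nnegrE ?normr_ge0 //.
exact: mulr_ge0 C0 (ltW T0).
Qed.
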